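(* Let $N\ge 1$ be an integer and let $M$ be the set of pairs produced by the born-free matching algorithm for $N$. Then $M$ is a matching of the graph $G_N$ and $G_N$ contains no flat alternating cycle with respect to $M$.
   Context: For a positive integer $N$, let $G_N$ be the graph with vertex set $\{1,\dots,N\}$ in which $x$ and $y$ are adjacent iff $y=px$ or $x=py$ for some prime $p$. The rank of $n$ is $\Omega(n)$, the number of prime factors of $n$ counted with multiplicity. A matching is a set of edges no two sharing an endpoint. A cycle is alternating (with respect to a matching) if exactly every other edge of the cycle lies in the matching; it is flat if for some integer $k$ all its vertices have rank $k$ or $k+1$. For a prime $p$, let $S_p=\{(x,px): x\in\mathbb{N},\ px\le N\}$. The born-free matching algorithm for $N$: start with $M=\emptyset$; run through the primes $p\le N$ in descending order; for each such $p$, run through the pairs $(x,px)\in S_p$ in descending order of $x$, and add $(x,px)$ to $M$ whenever neither $x$ nor $px$ is an endpoint of a pair already in $M$. *)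

From mathcomp Require Import all_boot.
Set Implicit Arguments. Unset Strict Implicit. Unset Printing Implicit Defensive.

(* Omega n: number of prime factors of n counted with multiplicity (the rank). *)
Definition bigOmega (n : nat) : nat := \sum_(p <- primes n) logn p n.

Definition adj (N x y : nat) : Prop :=
  [/\ 1 <= x <= N, 1 <= y <= N &
      exists p, prime p /\ (y = p * x \/ x = p * y)].

Definition endpoint (M : seq (nat * nat)) (v : nat) : bool :=
  has (fun e => (e.1 == v) || (e.2 == v)) M.

Definition bf_step (p : nat) (M : seq (nat * nat)) (x : nat) : seq (nat * nat) :=
  if ~~ endpoint M x && ~~ endpoint M (p * x) then rcons M (x, p * x) else M.

Definition primes_desc (N : nat) : seq nat := [seq p <- rev (iota 1 N) | prime p].

(* S_p in descending order of x: x = N %/ p, ..., 1 (i.e. x >= 1, p x <= N) *)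
Definition Sp_desc (N p : nat) : seq nat := rev (iota 1 (N %/ p)).

Definition born_free (N : nat) : seq (nat * nat) :=
  foldl (fun M p => foldl (bf_step p) M (Sp_desc N p)) [::] (primes_desc N).

Definition is_matching (N : nat) (M : seq (nat * nat)) : Prop :=
  (forall e, e \in M -> adj N e.1 e.2) /\
  (forall e f, e \in M -> f \in M -> e != f ->
     [&& e.1 != f.1, e.1 != f.2, e.2 != f.1 & e.2 != f.2]).

Definition edge_in (M : seq (nat * nat)) (a b : nat) : bool :=
  ((a, b) \in M) || ((b, a) \in M).

Definition is_cycle (N : nat) (c : seq nat) : Prop :=
  3 <= size c /\ uniq c /\
  forall i, i < size c -> adj N (nth 0 c i) (nth 0 c (i.+1 %% size c)).

Definition cyc_edge_in (M : seq (nat * nat)) (c : seq nat) (i : nat) : bool :=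
  edge_in M (nth 0 c (i %% size c)) (nth 0 c (i.+1 %% size c)).

Definition alternating (M : seq (nat * nat)) (c : seq nat) : Prop :=
  forall i, i < size c -> cyc_edge_in M c i != cyc_edge_in M c i.+1.

Definition flat (c : seq nat) : Prop :=
  exists k, forall v, v \in c -> bigOmega v = k \/ bigOmega v = k.+1.

(* The born-free algorithm is a greedy matching on the pairs (x, p x) taken
   in order of non-increasing prime p, so whenever it skips (y, q y), one of y,
   q y is already covered by a chosen pair of ratio at least q.  Along a flat
   cycle the ranks alternate, so every edge joins some y of the lower rank to
   q y with q prime; let P be the largest such q.  An unmatched cycle edge
   {y, q y} is dominated by a chosen pair covering y or q y, which by
   alternation is a matched edge of the cycle; comparing ranks shows that its
   ratio differs from q, so q < P.  Hence all edges of ratio P are matched.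
   Since rank and membership in the matching both alternate along the cycle,
   the matched edges all go upwards or all go downwards, so the P-adic
   valuation is monotone along the cycle and changes strictly on an edge of
   ratio P: impossible on a closed cycle. *)

From mathcomp Require Import all_boot zify.

Set Implicit Arguments.
Unset Strict Implicit.
Unset Printing Implicit Defensive.

Lemma bigOmega_sum (s : seq nat) n :
  uniq s -> {subset primes n <= s} -> bigOmega n = \sum_(q <- s) logn q n.
Proof.
move=> s_uniq sub_s; rewrite (bigID (mem (primes n))) /= [X in _ + X]big1; last first.
  by move=> q /negbTE q_n; apply/eqP; rewrite -leqn0 leqNgt logn_gt0 q_n.
rewrite addn0 -big_filter; apply: perm_big.
apply: uniq_perm; rewrite ?primes_uniq ?filter_uniq // => q.
by rewrite mem_filter; case: (boolP (q \in primes n)) => // /sub_s.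
Qed.

Lemma bigOmega_mulp p n : prime p -> 0 < n -> bigOmega (p * n) = (bigOmega n).+1.
Proof.
move=> p_pr n_gt0; have p_gt0 := prime_gt0 p_pr.
have sub_pn : {subset primes n <= primes (p * n)}.
  by move=> q; rewrite !mem_primes muln_gt0 p_gt0 => /and3P[-> -> /dvdn_mull ->].
rewrite (bigOmega_sum (primes_uniq _) sub_pn) {1}/bigOmega.
rewrite (eq_bigr (fun q => (q == p) + logn q n)); last first.
  by move=> q _; rewrite lognM // logn_prime.
rewrite big_split /= -add1n; congr (_ + _).
have p_pn : p \in primes (p * n) by rewrite mem_primes p_pr muln_gt0 p_gt0 n_gt0 dvdn_mulr.
by rewrite (bigD1_seq p) ?primes_uniq //= eqxx big1 // => q /negbTE ->.
Qed.

Definition ends (e : nat * nat) : seq nat := [:: e.1; e.2].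

Definition meets (e f : nat * nat) : bool := has (mem (ends f)) (ends e).

Definition ratio (e : nat * nat) : nat := e.2 %/ e.1.

Lemma meets_refl e : meets e e.
Proof. by apply/hasP; exists e.1; rewrite !inE eqxx. Qed.

Lemma endpointP M v : reflect (exists2 f, f \in M & v \in ends f) (endpoint M v).
Proof. by apply: (iffP hasP) => -[f fM vf]; exists f; rewrite // !inE !(eq_sym v) in vf *. Qed.

Definition add_free (M : seq (nat * nat)) (e : nat * nat) : seq (nat * nat) :=
  if ~~ endpoint M e.1 && ~~ endpoint M e.2 then rcons M e else M.

Definition greedy_matching (E : seq (nat * nat)) : seq (nat * nat) :=
  foldl add_free [::] E.

Lemma add_free_subset M e : {subset M <= add_free M e}.
Proof. by rewrite /add_free; case: ifP => _ f fM; rewrite ?mem_rcons ?inE fM ?orbT. Qed.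

Lemma greedy_matching_rcons E e :
  greedy_matching (rcons E e) = add_free (greedy_matching E) e.
Proof. exact: foldl_rcons. Qed.

Lemma greedy_matching_subset E : {subset greedy_matching E <= E}.
Proof.
elim/last_ind: E => [//|E e IH] f; rewrite greedy_matching_rcons mem_rcons inE /add_free.
case: ifP => [_|_ /IH->]; rewrite ?orbT // mem_rcons inE.
by case/predU1P=> [->|/IH->]; rewrite ?eqxx ?orbT.
Qed.

Lemma greedy_matching_disjoint E :
  {in greedy_matching E &, forall e f, meets e f -> e = f}.
Proof.
elim/last_ind: E => [//|E z IH]; rewrite greedy_matching_rcons /add_free.
case: ifP => [/andP[/endpointP z1_free /endpointP z2_free]|_ //].
have z_alone f : f \in greedy_matching E -> ~~ meets z f.
  move=> fM; apply/hasP => -[v + v_f]; rewrite !inE => /orP[]/eqP v_z.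
  - by apply: z1_free; exists f; rewrite -?v_z.
  - by apply: z2_free; exists f; rewrite -?v_z.
move=> e f; rewrite !mem_rcons !inE => /predU1P[->|eM] /predU1P[->|fM] //.
- by move/negP: (z_alone f fM).
- by move=> e_z; case/negP: (z_alone e eM); apply/hasP; case/hasP: e_z => v; exists v.
- exact: IH.
Qed.

Lemma greedy_matching_dominates (r : rel (nat * nat)) E :
  reflexive r -> pairwise r E ->
  forall e, e \in E -> exists2 f, f \in greedy_matching E & r f e && meets e f.
Proof.
move=> r_refl; elim/last_ind: E => [//|E z IH].
rewrite pairwise_rcons => /andP[/allP r_z /IH{}IH] e.
rewrite greedy_matching_rcons mem_rcons inE => /predU1P[->|/IH[f fM rf]]; last first.
  by exists f => //; apply: add_free_subset.
rewrite /add_free; case: ifP => [_|].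
  by exists z; rewrite ?mem_rcons ?inE ?eqxx ?r_refl ?meets_refl.
move/negbT; rewrite negb_and !negbK => z_used.
have [v [vz /endpointP[f fM vf]]] : exists v, v \in ends z /\ endpoint (greedy_matching E) v.
  by case/orP: z_used => used; [exists z.1 | exists z.2]; rewrite !inE eqxx ?orbT.
exists f => //; rewrite r_z; last exact: greedy_matching_subset fM.
by apply/hasP; exists v.
Qed.

Definition born_free_edges (N : nat) : seq (nat * nat) :=
  flatten [seq [seq (x, p * x) | x <- Sp_desc N p] | p <- primes_desc N].

Lemma born_freeE N : born_free N = greedy_matching (born_free_edges N).
Proof.
rewrite /born_free /greedy_matching /born_free_edges.
elim: (primes_desc N) [::] => [|p ps IH] M //=.
rewrite foldl_cat IH; congr foldl.
by elim: (Sp_desc N p) M => //= x xs IHx M; rewrite IHx.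
Qed.

Lemma mem_Sp_desc N p x : prime p -> (x \in Sp_desc N p) = (0 < x) && (p * x <= N).
Proof.
by move=> p_pr; rewrite mem_rev mem_iota add1n ltnS leq_divRL ?(prime_gt0 p_pr) // mulnC.
Qed.

Lemma mem_primes_desc N p : (p \in primes_desc N) = prime p && (p <= N).
Proof.
rewrite mem_filter mem_rev mem_iota add1n ltnS.
by case: (boolP (prime p)) => [/prime_gt0->|]; rewrite ?andbF.
Qed.

Lemma born_free_edgesP N e :
  reflect (exists p x, [/\ prime p, 0 < x, p * x <= N & e = (x, p * x)])
          (e \in born_free_edges N).
Proof.
apply: (iffP flatten_mapP) => [[p] | [p [x [p_pr x_gt0 px_le ->]]]].
  rewrite mem_primes_desc => /andP[p_pr _] /mapP[x].
  by rewrite mem_Sp_desc // => /andP[x_gt0 px_le] ->; exists p, x.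
exists p; last by apply/mapP; exists x; rewrite ?mem_Sp_desc ?x_gt0.
rewrite mem_primes_desc p_pr (leq_trans _ px_le) // leq_pmulr //.
Qed.

Lemma born_free_edges_sorted N :
  pairwise [rel f e | ratio e <= ratio f] (born_free_edges N).
Proof.
pose block p := [seq (x, p * x) | x <- Sp_desc N p].
have ratio_block p e : prime p -> e \in block p -> ratio e = p.
  by move=> p_pr /mapP[x]; rewrite mem_Sp_desc // => /andP[x_gt0 _] ->; rewrite /ratio mulnK.
have block_sorted p : prime p -> pairwise [rel f e | ratio e <= ratio f] (block p).
  move=> p_pr; apply/(pairwiseP (0, 0)) => i j i_lt j_lt _ /=.
  by rewrite !(ratio_block p) ?mem_nth.
have : pairwise geq (primes_desc N).
  have geq_trans : transitive geq by move=> a b c /= ba cb; apply: leq_trans cb ba.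
  by rewrite -sorted_pairwise // sorted_filter // rev_sorted iota_sorted.
have : all prime (primes_desc N) by apply/allP => p; rewrite mem_primes_desc => /andP[].
rewrite /born_free_edges -/block.
elim: (primes_desc N) => [//|p ps IH] /= /andP[p_pr ps_pr] /andP[/allP p_ge ps_sorted].
rewrite pairwise_cat IH // (block_sorted p p_pr) /= andbT.
apply/allrelP=> f e /(ratio_block _ _ p_pr) f_p /flatten_mapP[q q_ps].
by move/(ratio_block _ _ (allP ps_pr _ q_ps)) => e_q /=; rewrite f_p e_q; apply: p_ge.
Qed.

Lemma born_free_increasing N e : e \in born_free N -> e.1 < e.2.
Proof.
rewrite born_freeE => /greedy_matching_subset/born_free_edgesP[p [x [p_pr x_gt0 _ ->]]].
exact: ltn_Pmull (prime_gt1 p_pr) x_gt0.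
Qed.

Lemma born_free_disjoint N : {in born_free N &, forall e f, meets e f -> e = f}.
Proof. by rewrite born_freeE; apply: greedy_matching_disjoint. Qed.

Lemma born_free_dominating N q y : prime q -> 0 < y -> q * y <= N ->
  exists2 f, f \in born_free N & (q <= ratio f) && meets (y, q * y) f.
Proof.
move=> q_pr y_gt0 qy_le; rewrite born_freeE.
have qy_edge : (y, q * y) \in born_free_edges N by apply/born_free_edgesP; exists q, y.
have [f fM /andP[q_le meets_f]] :=
  greedy_matching_dominates (fun e => leqnn _) (born_free_edges_sorted N) qy_edge.
by exists f; rewrite // meets_f andbT -{1}(mulnK q y_gt0).
Qed.

Lemma born_free_matching N : is_matching N (born_free N).
Proof.
split=> [e | e f eM fM e_ne_f].
  rewrite born_freeE => /greedy_matching_subset/born_free_edgesP.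
  case=> p [x [p_pr x_gt0 px_le ->]] /=.
  have x_lt_px := ltn_Pmull (prime_gt1 p_pr) x_gt0.
  by split; [lia | lia | exists p; split; [|left]].
have : ~~ meets e f by apply: (contra_neqN _ e_ne_f); exact: born_free_disjoint eM fM.
by rewrite /meets /= !inE !negb_or andbT -!andbA.
Qed.

Lemma modn_succ_mod m d : (m %% d).+1 %% d = m.+1 %% d.
Proof. by rewrite -addn1 modnDml addn1. Qed.

Lemma homo_loop_step_rev (r : rel nat) (h : nat -> nat) n i :
  reflexive r -> transitive r -> (forall j, r (h j) (h j.+1)) ->
  h n = h 0 -> i < n -> r (h i.+1) (h i).
Proof.
move=> r_refl r_trans r_step h_loop i_lt.
have h_mono := homo_leq r_refl r_trans r_step.
by apply: (r_trans (h n)); [apply: h_mono | rewrite h_loop; apply: h_mono].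
Qed.

Lemma meets_same_rank q x y : prime q -> 0 < x -> 0 < y -> bigOmega x = bigOmega y ->
  meets (x, q * x) (y, q * y) -> x = y.
Proof.
move=> q_pr x_gt0 y_gt0 xy /hasP[v]; rewrite !inE /= => /orP[]/eqP-> /orP[]/eqP //.
- by move=> xE; have := bigOmega_mulp q_pr y_gt0; rewrite -xE xy; lia.
- by move=> yE; have := bigOmega_mulp q_pr x_gt0; rewrite yE -xy; lia.
- by move/eqP; rewrite eqn_pmul2l ?prime_gt0 // => /eqP.
Qed.

(* The cycle is read as an n-periodic walk g. *)
Section FlatAlternatingWalk.

Variables (N n k : nat) (g : nat -> nat) (M : seq (nat * nat)).
Hypothesis n_gt0 : 0 < n.
Hypothesis g_mod : forall j, g (j %% n) = g j.
Hypothesis g_adj : forall j, adj N (g j) (g j.+1).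
Hypothesis g_flat : forall j, bigOmega (g j) = k \/ bigOmega (g j) = k.+1.
Hypothesis M_alternating : forall j, edge_in M (g j) (g j.+1) != edge_in M (g j.+1) (g j.+2).
Hypothesis M_increasing : forall e, e \in M -> e.1 < e.2.
Hypothesis M_disjoint : {in M &, forall e f, meets e f -> e = f}.
Hypothesis M_dominating : forall q y, prime q -> 0 < y -> q * y <= N ->
  exists2 f, f \in M & (q <= ratio f) && meets (y, q * y) f.

Local Notation matched j := (edge_in M (g j) (g j.+1)).
Local Notation low v := (bigOmega v == k).

Let lo j := if low (g j) then g j else g j.+1.
Let hi j := if low (g j) then g j.+1 else g j.
Let ratio_at j := ratio (lo j, hi j).

Lemma g_periodic j : g (j + n) = g j.
Proof. by rewrite -g_mod modnDr g_mod. Qed.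

Lemma g_succ_mod j : g (j %% n).+1 = g j.+1.
Proof. by rewrite -g_mod modn_succ_mod g_mod. Qed.

Lemma g_gt0 j : 0 < g j.
Proof. by case: (g_adj j) => /andP[]. Qed.

Lemma g_le j : g j <= N.
Proof. by case: (g_adj j) => /andP[]. Qed.

Lemma matched_alternates j : matched j.+1 = ~~ matched j.
Proof. by move: (M_alternating j); case: (matched j); case: (matched j.+1). Qed.

Lemma low_step i i' r : prime r -> g i' = r * g i -> low (g i) && ~~ low (g i').
Proof.
move=> r_pr gE; move: (g_flat i) (g_flat i'); rewrite gE bigOmega_mulp ?g_gt0 //; lia.
Qed.

Lemma edge_lohi j : [/\ prime (ratio_at j), 0 < lo j, hi j = ratio_at j * lo j & low (lo j)].
Proof.
have [_ _ [r [r_pr [gE|gE]]]] := g_adj j.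
- have /andP[low_j _] := low_step r_pr gE.
  by rewrite /ratio_at /lo /hi low_j gE /ratio /= mulnK ?g_gt0.
- have /andP[low_Sj not_low_j] := low_step r_pr gE.
  by rewrite /ratio_at /lo /hi (negbTE not_low_j) gE /ratio /= mulnK ?g_gt0.
Qed.

Lemma low_alternates j : low (g j.+1) = ~~ low (g j).
Proof.
have [_ _ [r [r_pr [gE|gE]]]] := g_adj j.
  by have /andP[-> /negbTE->] := low_step r_pr gE.
by have /andP[-> /negbTE->] := low_step r_pr gE.
Qed.

Lemma ends_lohi j : ends (lo j, hi j) =i [:: g j; g j.+1].
Proof. by rewrite /lo /hi; case: ifP => _ v; rewrite !inE // orbC. Qed.

Lemma matched_lohi j : matched j = ((lo j, hi j) \in M).
Proof.
have [ratio_pr lo_gt0 hiE _] := edge_lohi j.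
have lo_lt_hi : lo j < hi j by rewrite hiE ltn_Pmull ?prime_gt1.
have -> : matched j = edge_in M (lo j) (hi j).
  by rewrite /lo /hi /edge_in; case: ifP; rewrite // orbC.
rewrite /edge_in; case: ((hi j, lo j) \in M) / idP; rewrite ?orbF // => /M_increasing /=.
by rewrite ltnNge ltnW.
Qed.

Let P := \max_(i < n) ratio_at i.

Lemma ratio_at_le_max j : ratio_at j <= P.
Proof.
have -> : ratio_at j = ratio_at (j %% n) by rewrite /ratio_at /lo /hi g_mod g_succ_mod.
exact: (@leq_bigmax _ (fun i : 'I_n => ratio_at i) (Ordinal (ltn_pmod j n_gt0))).
Qed.

Lemma max_attained : exists2 i, i < n & ratio_at i = P.
Proof.
have [i0 max_i0] := @eq_bigmax _ (fun i : 'I_n => ratio_at i) (ltac:(by rewrite card_ord)).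
by exists i0 => //; rewrite -max_i0.
Qed.

Lemma vertex_matched j : exists2 j', matched j' & g j \in [:: g j'; g j'.+1].
Proof.
case: (boolP (matched j)) => [Mj|nMj]; first by exists j; rewrite ?inE ?eqxx.
have jn : (j + n.-1).+1 = j + n by rewrite -addnS prednK.
exists (j + n.-1); last by rewrite jn g_periodic !inE eqxx orbT.
have := matched_alternates (j + n.-1); rewrite jn -addSn !g_periodic (negbTE nMj).
by move/esym/negbFE.
Qed.

Lemma matched_vertex_edge j f :
  f \in M -> g j \in ends f -> exists2 j', matched j' & f = (lo j', hi j').
Proof.
move=> fM gj_f; have [j' Mj' gj_j'] := vertex_matched j.
exists j' => //; apply: M_disjoint; rewrite // -?matched_lohi //.
by apply/hasP; exists (g j); rewrite // inE ends_lohi.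
Qed.

Lemma unmatched_lt_max j : ~~ matched j -> ratio_at j < P.
Proof.
move=> nMj; have [ratio_pr lo_gt0 hiE lo_low] := edge_lohi j.
have hi_le : ratio_at j * lo j <= N by rewrite -hiE /hi; case: ifP; rewrite g_le.
have [f fM /andP[ratio_le]] := M_dominating ratio_pr lo_gt0 hi_le; rewrite -hiE => meets_f.
have [j' Mj' fE] : exists2 j', matched j' & f = (lo j', hi j').
  case/hasP: meets_f => v + v_f; rewrite ends_lohi !inE => /orP[]/eqP v_g.
    by rewrite v_g in v_f; apply: matched_vertex_edge fM v_f.
  by rewrite v_g in v_f; apply: matched_vertex_edge fM v_f.
have [_ lo'_gt0 hi'E lo'_low] := edge_lohi j'.
have ratio_le' : ratio_at j <= ratio_at j' by rewrite fE in ratio_le.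
apply: leq_trans (ratio_at_le_max j'); rewrite ltn_neqAle ratio_le' andbT.
apply: contra nMj => /eqP ratioE.
have lo_eq : lo j = lo j'.
  apply: (meets_same_rank ratio_pr) => //; first by rewrite (eqP lo_low) (eqP lo'_low).
  by rewrite -hiE ratioE -hi'E -fE.
by rewrite matched_lohi (_ : (lo j, hi j) = f) // fE hiE hi'E ratioE lo_eq.
Qed.

Lemma max_matched j : ratio_at j = P -> matched j.
Proof. by move=> ratioE; apply/negPn/negP => /unmatched_lt_max; rewrite ratioE ltnn. Qed.

Lemma logn_up j p : low (g j) -> logn p (g j.+1) = logn p (g j) + (p == ratio_at j).
Proof.
move=> lj; have [ratio_pr lo_gt0 hiE _] := edge_lohi j.
have [loE hiE'] : lo j = g j /\ hi j = g j.+1 by rewrite /lo /hi lj.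
by rewrite -hiE' hiE lognM ?(prime_gt0 ratio_pr) // logn_prime // loE addnC.
Qed.

Lemma logn_down j p : ~~ low (g j) -> logn p (g j) = logn p (g j.+1) + (p == ratio_at j).
Proof.
move=> nlj; have [ratio_pr lo_gt0 hiE _] := edge_lohi j.
have [loE hiE'] : lo j = g j.+1 /\ hi j = g j by rewrite /lo /hi (negbTE nlj).
by rewrite -hiE' hiE lognM ?(prime_gt0 ratio_pr) // logn_prime // loE addnC.
Qed.

Lemma low_matched_parity j : (low (g j) == matched j) = (low (g 0) == matched 0).
Proof.
elim: j => // j IH; rewrite low_alternates matched_alternates -IH.
by case: (low _); case: (matched j).
Qed.

Lemma no_flat_alternating_walk : False.
Proof.
have [i0 i0_lt ratio_i0] := max_attained.
have P_pr : prime P by rewrite -ratio_i0; case: (edge_lohi i0).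
pose h j := logn P (g j).
have h_loop : h n = h 0 by rewrite /h -g_mod modnn.
have h_flat j : P != ratio_at j -> h j.+1 = h j.
  move=> /negbTE Pj; rewrite /h; case: (boolP (low (g j))) => lj.
    by rewrite logn_up // Pj addn0.
  by rewrite (logn_down _ lj) Pj addn0.
have low_max j : P = ratio_at j -> low (g j) = (low (g 0) == matched 0).
  by move=> /esym/max_matched Mj; rewrite -(low_matched_parity j) Mj eqb_id.
case: (boolP (low (g 0) == matched 0)) => parity.
- have h_up j : h j <= h j.+1.
    have [Pj|/h_flat->//] := eqVneq P (ratio_at j).
    by rewrite /h logn_up ?leq_addr // (low_max _ Pj).
  have : h i0 < h i0.+1.
    by rewrite /h logn_up ?ratio_i0 ?eqxx ?addn1 // (low_max _ (esym ratio_i0)).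
  by rewrite ltnNge (homo_loop_step_rev leqnn leq_trans h_up h_loop i0_lt).
- have geq_trans : transitive geq by move=> a b c /= ba cb; apply: leq_trans cb ba.
  have h_down j : h j.+1 <= h j.
    have [Pj|/h_flat->//] := eqVneq P (ratio_at j).
    by rewrite /h (logn_down (j := j) P) ?leq_addr // (low_max _ Pj).
  have : h i0.+1 < h i0.
    by rewrite /h (logn_down (j := i0) P) ?ratio_i0 ?eqxx ?addn1 // (low_max _ (esym ratio_i0)).
  apply/negP; rewrite -leqNgt.
  exact: (homo_loop_step_rev (r := geq) leqnn geq_trans h_down h_loop i0_lt).
Qed.

End FlatAlternatingWalk.

Lemma no_flat_alternating_cycle N M c :
  (forall e, e \in M -> e.1 < e.2) ->
  {in M &, forall e f, meets e f -> e = f} ->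
  (forall q y, prime q -> 0 < y -> q * y <= N ->
     exists2 f, f \in M & (q <= ratio f) && meets (y, q * y) f) ->
  is_cycle N c -> alternating M c -> flat c -> False.
Proof.
move=> M_incr M_disj M_dom [c_ge3 [_ c_adj]] c_alt [k c_flat].
have n_gt0 : 0 < size c by apply: leq_trans c_ge3.
pose g j := nth 0 c (j %% size c).
have cyc_edge_mod i : cyc_edge_in M c (i %% size c) = cyc_edge_in M c i.
  by rewrite /cyc_edge_in modn_mod modn_succ_mod.
have cyc_edge_succ_mod i : cyc_edge_in M c (i %% size c).+1 = cyc_edge_in M c i.+1.
  by rewrite -cyc_edge_mod modn_succ_mod cyc_edge_mod.
apply: (@no_flat_alternating_walk N (size c) k g M) => // j.
- by rewrite /g modn_mod.
- by rewrite /g -modn_succ_mod; apply: c_adj; rewrite ltn_pmod.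
- by apply: c_flat; rewrite mem_nth ?ltn_pmod.
- by move: (c_alt _ (ltn_pmod j n_gt0)); rewrite cyc_edge_mod cyc_edge_succ_mod.
Qed.

Theorem theorem3 (N : nat) : 1 <= N ->
  is_matching N (born_free N) /\
  ~ (exists c : seq nat,
        is_cycle N c /\ alternating (born_free N) c /\ flat c).
Proof.
move=> _; split; first exact: born_free_matching.
case=> c [c_cycle [c_alt c_flat]].
exact: no_flat_alternating_cycle (@born_free_increasing N) (@born_free_disjoint N)
  (@born_free_dominating N) c_cycle c_alt c_flat.
Qed.
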